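(* Let $G$ be a closed and continuous cyclic graph with vertex set $V$ and $\mathrm{wf}(G)=\frac pq$. Then for all $v\in V$ and $i,j\ge0$: (i) $f_i(v)\in V$; (ii) $\gamma_{i+j}(v)=\gamma_i(v)+\gamma_j(f_i(v))$; (iii) $f_{i+j}(v)=f_j(f_i(v))$.
   Context: $S^1=\mathbb{R}/\mathbb{Z}$ (points identified with $[0,1)$); $\preceq$/$\prec$ clockwise order; $\vec d(p,q)\in[0,1)$ clockwise distance. A directed graph has no loops and no pair of opposite edges; $N^+[G,v]=\{v\}\cup\{w:v\to w\}$. A directed graph with vertex set $V\subseteq S^1$ is cyclic if whenever $v\to u$ is an edge, $v\to w$ and $w\to u$ are edges for all $w\in V$ with $v\prec w\prec u\prec v$. Winding fraction: for finite cyclic $G$, $\mathrm{wf}(G)=\sup\{k/n:\exists$ cyclic homomorphism $C_n^k\to G\}$ ($C_n^k$: vertices $0..n-1$, edges $i\to i+s\bmod n$, $1\le s\le k<n/2$); in general, the supremum over finite induced subgraphs. For $m\ge1$, $\gamma_m(v_0)=\sup\{\sum_{i=0}^{m-1}\vec d(v_i,v_{i+1}): v_{i+1}\in N^+[G,v_i]\}$, $\gamma_0=0$, and $f_m(v)=(v+\gamma_m(v))\bmod 1\in S^1$. $G$ is closed if $V$ is closed in $S^1$, and continuous if every $\gamma_m:V\to\mathbb{R}$ is continuous. *)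

From Stdlib Require Import Reals Lra Lia List ClassicalEpsilon.
From Stdlib Require Import Rtopology.
Open Scope R_scope.

(** Points of S^1 = R/Z are represented by reals in [0,1).
    [frac x] is the representative in [0,1) of x mod 1 (Int_part = floor). *)
Definition frac (x : R) : R := x - IZR (Int_part x).

(** clockwise distance d(p,q) in [0,1) (clockwise = increasing direction). *)
Definition cwd (p q : R) : R := frac (q - p).

(** v < w < u < v in the cyclic order: w lies strictly inside the clockwise
    open arc from v to u. *)
Definition cyc_between (v w u : R) : Prop := 0 < cwd v w < cwd v u.

Definition circ_dist (p q : R) : R := Rmin (cwd p q) (cwd q p).

Definition digraph_on_circle (V : R -> Prop) (E : R -> R -> Prop) : Prop :=
  (forall x, V x -> 0 <= x < 1) /\
  (forall x y, E x y -> V x /\ V y) /\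
  (forall x, ~ E x x) /\
  (forall x y, E x y -> ~ E y x).

Definition is_cyclic_graph (V : R -> Prop) (E : R -> R -> Prop) : Prop :=
  digraph_on_circle V E /\
  forall v u, E v u -> forall w, V w -> cyc_between v w u -> E v w /\ E w u.

Fixpoint sumR (f : nat -> R) (m : nat) : R :=
  match m with O => 0 | S m' => sumR f m' + f m' end.

(** cyclic homomorphism C_n^k -> G[W] (W a finite set of vertices given as a
    list): phi maps 0..n-1 into W, every edge i -> i+s mod n (1<=s<=k) to an
    edge of G, and phi(0) <= phi(1) <= ... <= phi(n-1) <= phi(0) winds once
    around the circle clockwise (total clockwise winding exactly 1). *)
Definition cyclic_hom (V : R -> Prop) (E : R -> R -> Prop) (W : list R)
    (n k : nat) (phi : nat -> R) : Prop :=
  (forall i, (i < n)%nat -> In (phi i) W) /\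
  (forall i s, (i < n)%nat -> (1 <= s <= k)%nat ->
      E (phi i) (phi ((i + s) mod n)%nat)) /\
  sumR (fun i => cwd (phi i) (phi ((i + 1) mod n)%nat)) n = 1.

Definition wf_values (V : R -> Prop) (E : R -> R -> Prop) (W : list R)
    (r : R) : Prop :=
  exists n k phi, (1 <= k)%nat /\ (2 * k < n)%nat /\
    cyclic_hom V E W n k phi /\ r = INR k / INR n.

Definition wf_finite_is (V : R -> Prop) (E : R -> R -> Prop) (W : list R)
    (x : R) : Prop :=
  is_lub (fun r => r = 0 \/ wf_values V E W r) x.

Definition wf_is (V : R -> Prop) (E : R -> R -> Prop) (x : R) : Prop :=
  is_lub (fun y => exists W : list R, (forall w, In w W -> V w) /\
                                      wf_finite_is V E W y) x.

(** supremum (the least upper bound whenever it exists) *)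
Definition lub (A : R -> Prop) : R :=
  epsilon (inhabits 0) (fun x => is_lub A x).

(** walks v_0 = v0, v_{i+1} in N^+[G, v_i] of length m *)
Definition closed_nbhd_walk (E : R -> R -> Prop) (m : nat) (v0 : R)
    (w : nat -> R) : Prop :=
  w O = v0 /\ forall i, (i < m)%nat -> w (S i) = w i \/ E (w i) (w (S i)).

Definition gamma (E : R -> R -> Prop) (m : nat) (v0 : R) : R :=
  match m with
  | O => 0
  | S _ => lub (fun s => exists w, closed_nbhd_walk E m v0 w /\
                          s = sumR (fun i => cwd (w i) (w (S i))) m)
  end.

Definition fm (E : R -> R -> Prop) (m : nat) (v : R) : R :=
  frac (v + gamma E m v).

(** V closed in S^1 : its preimage under the quotient map R -> R/Z is closed *)
Definition closed_graph (V : R -> Prop) : Prop :=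
  closed_set (fun x => V (frac x)).

Definition continuous_graph (V : R -> Prop) (E : R -> R -> Prop) : Prop :=
  forall (m : nat) (v : R), V v ->
    forall eps, 0 < eps -> exists delta, 0 < delta /\
      forall w, V w -> circ_dist v w < delta ->
        Rabs (gamma E m w - gamma E m v) < eps.

From Pilot Require Import Defs.
From Stdlib Require Import Reals Lra Lia Classical ClassicalEpsilon Rtopology.
Open Scope R_scope.

(* In a cyclic graph a walk from x can be transferred to any vertex
   y = x + d ahead of x at a loss of at most d: a first step jumping over y can
   be rerouted through y. Since after i steps an (i+j)-walk from v sits on a
   vertex at most gamma_i(v) behind f_i(v), this gives
   gamma_{i+j}(v) <= gamma_i(v) + gamma_j(f_i(v)). Conversely, concatenating
   near-optimal walks gives the reverse inequality, once continuity of gamma_j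
   lets us replace the endpoint of a near-optimal i-walk by f_i(v). The
   endpoints of those walks are vertices accumulating at f_i(v), so closedness
   of V gives f_i(v) in V, and (iii) follows from (ii). The value of the
   winding fraction plays no role. *)

Lemma frac_unique x k : IZR k <= x < IZR k + 1 -> frac x = x - IZR k.
Proof.
  intros Hk. unfold frac. rewrite <- (Int_part_spec x k) by lra. reflexivity.
Qed.

Lemma frac_range x : 0 <= frac x < 1.
Proof. unfold frac. destruct (base_Int_part x). lra. Qed.

Lemma frac_id x : 0 <= x < 1 -> frac x = x.
Proof. intros Hx. rewrite (frac_unique x 0); simpl; lra. Qed.

Lemma frac_add_IZR x k : frac (x + IZR k) = frac x.
Proof.
  destruct (base_Int_part x).
  rewrite (frac_unique (x + IZR k) (Int_part x + k)); rewrite ?plus_IZR.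
  - unfold frac. ring.
  - lra.
Qed.

Lemma frac_addl a b : frac (frac a + b) = frac (a + b).
Proof.
  replace (frac a + b) with ((a + b) + IZR (- Int_part a))
    by (unfold frac; rewrite opp_IZR; ring).
  apply frac_add_IZR.
Qed.

Lemma frac_subr a b : frac (a - frac b) = frac (a - b).
Proof.
  replace (a - frac b) with ((a - b) + IZR (Int_part b)) by (unfold frac; ring).
  apply frac_add_IZR.
Qed.

Lemma cwd_xx x : cwd x x = 0.
Proof. unfold cwd. rewrite Rminus_diag. apply frac_id. lra. Qed.

Lemma cwd_range x y : 0 <= cwd x y < 1.
Proof. apply frac_range. Qed.

Lemma frac_add_cwd x y : 0 <= y < 1 -> frac (x + cwd x y) = y.
Proof.
  intros Hy. unfold cwd. rewrite Rplus_comm, frac_addl.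
  replace (y - x + x) with y by ring. apply frac_id; assumption.
Qed.

Lemma cwd_frac_addr x d : 0 <= d < 1 -> cwd x (frac (x + d)) = d.
Proof.
  intros Hd. unfold cwd, Rminus. rewrite frac_addl.
  replace (x + d + - x) with d by ring. apply frac_id; assumption.
Qed.

Lemma cwd_frac_add x a b :
  0 <= b - a < 1 -> cwd (frac (x + a)) (frac (x + b)) = b - a.
Proof.
  intros Hab. unfold cwd. rewrite frac_subr. unfold Rminus at 1. rewrite frac_addl.
  replace (x + b + - (x + a)) with (b - a) by ring. apply frac_id; assumption.
Qed.

Lemma sumR_ext f g m :
  (forall k, (k < m)%nat -> f k = g k) -> sumR f m = sumR g m.
Proof.
  induction m as [|m IH]; intros Hfg; simpl; [reflexivity|].
  rewrite IH by (intros; apply Hfg; lia). rewrite Hfg by lia. reflexivity.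
Qed.

Lemma sumR_add f i j :
  sumR f (i + j) = sumR f i + sumR (fun k => f (i + k)%nat) j.
Proof.
  induction j as [|j IH]; simpl.
  - rewrite Nat.add_0_r. ring.
  - rewrite Nat.add_succ_r. simpl. rewrite IH. ring.
Qed.

Lemma sumR_le_INR f m : (forall k, f k <= 1) -> sumR f m <= INR m.
Proof.
  intros Hf. induction m as [|m IH]; simpl sumR.
  - simpl; lra.
  - rewrite S_INR. specialize (Hf m). lra.
Qed.

Lemma sumR_0 f m : (forall k, f k = 0) -> sumR f m = 0.
Proof. intros Hf. induction m as [|m IH]; simpl; [reflexivity|]. rewrite IH, Hf; ring. Qed.

Definition cw_length (w : nat -> R) (m : nat) : R :=
  sumR (fun i => cwd (w i) (w (S i))) m.

Definition walk_lengths (E : R -> R -> Prop) (m : nat) (v : R) : R -> Prop :=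
  fun s => exists w, closed_nbhd_walk E m v w /\ s = cw_length w m.

Lemma cw_length_le w m : cw_length w m <= INR m.
Proof. apply sumR_le_INR. intros k. pose proof (cwd_range (w k) (w (S k))). lra. Qed.

Lemma cw_length_add w i j :
  cw_length w (i + j) = cw_length w i + cw_length (fun k => w (i + k)%nat) j.
Proof.
  unfold cw_length. rewrite sumR_add. f_equal.
  apply sumR_ext. intros k _. rewrite Nat.add_succ_r. reflexivity.
Qed.

Lemma const_walk E m v : closed_nbhd_walk E m v (fun _ => v).
Proof. split; auto. Qed.

Lemma cw_length_const v m : cw_length (fun _ => v) m = 0.
Proof. apply sumR_0. intros; apply cwd_xx. Qed.

Lemma gamma_is_lub E m v : is_lub (walk_lengths E m v) (gamma E m v).
Proof.
  destruct m as [|m].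
  - split.
    + intros s [w [_ ->]]. unfold cw_length; simpl. lra.
    + intros b Hb. apply Hb. exists (fun _ => v).
      split; [apply const_walk | reflexivity].
  - change (is_lub (walk_lengths E (S m) v) (Defs.lub (walk_lengths E (S m) v))).
    unfold Defs.lub. apply epsilon_spec.
    destruct (completeness (walk_lengths E (S m) v)) as [x Hx].
    + exists (INR (S m)). intros s [w [_ ->]]. apply cw_length_le.
    + exists 0, (fun _ => v).
      split; [apply const_walk | symmetry; apply cw_length_const].
    + exists x; exact Hx.
Qed.

Lemma gamma_ge_walk E m v w :
  closed_nbhd_walk E m v w -> cw_length w m <= gamma E m v.
Proof. intros Hw. apply (proj1 (gamma_is_lub E m v)). exists w; auto. Qed.

Lemma gamma_approx E m v eps : 0 < eps ->
  exists w, closed_nbhd_walk E m v w /\ gamma E m v - eps < cw_length w m.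
Proof.
  intros Heps. apply NNPP. intros Hno.
  assert (gamma E m v <= gamma E m v - eps); [|lra].
  apply (proj2 (gamma_is_lub E m v)). intros s [w [Hw ->]].
  apply Rnot_lt_le. intros Hlt. apply Hno. exists w; auto.
Qed.

Lemma walk_ext E m v w w' : (forall k, (k <= m)%nat -> w k = w' k) ->
  closed_nbhd_walk E m v w ->
  closed_nbhd_walk E m v w' /\ cw_length w m = cw_length w' m.
Proof.
  intros Hww' [H0 Hstep]. split; [split|].
  - rewrite <- Hww' by lia. assumption.
  - intros k Hk. rewrite <- !Hww' by lia. auto.
  - apply sumR_ext. intros k Hk. rewrite !Hww' by lia. reflexivity.
Qed.

Lemma walk_split E i j v w : closed_nbhd_walk E (i + j) v w ->
  closed_nbhd_walk E i v w /\ closed_nbhd_walk E j (w i) (fun k => w (i + k)%nat).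
Proof.
  intros [H0 Hstep]. split; split.
  - assumption.
  - intros; apply Hstep; lia.
  - rewrite Nat.add_0_r. reflexivity.
  - intros k Hk. rewrite Nat.add_succ_r. apply Hstep. lia.
Qed.

Lemma walk_concat E i j v w1 w2 : closed_nbhd_walk E i v w1 ->
  closed_nbhd_walk E j (w1 i) w2 ->
  exists w, closed_nbhd_walk E (i + j) v w /\
            cw_length w (i + j) = cw_length w1 i + cw_length w2 j.
Proof.
  intros Hw1 Hw2.
  set (w := fun k => if (k <=? i)%nat then w1 k else w2 (k - i)%nat).
  assert (Hl : forall k, (k <= i)%nat -> w1 k = w k).
  { intros k Hk. unfold w. destruct (Nat.leb_spec k i); [reflexivity | lia]. }
  assert (Hr : forall k, w2 k = w (i + k)%nat).
  { intros k. unfold w. destruct (Nat.leb_spec (i + k) i).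
    - replace k with 0%nat by lia. rewrite Nat.add_0_r. apply Hw2.
    - f_equal. lia. }
  destruct (walk_ext E i v w1 w Hl Hw1) as [[W0 Wl] Sl].
  destruct (walk_ext E j (w1 i) w2 _ (fun k _ => Hr k) Hw2) as [[_ Wr] Sr].
  exists w. split.
  - split; [assumption|]. intros k Hk. destruct (Nat.lt_ge_cases k i).
    + apply Wl. assumption.
    + specialize (Wr (k - i)%nat ltac:(lia)).
      replace (i + (k - i))%nat with k in Wr by lia.
      replace (i + S (k - i))%nat with (S k) in Wr by lia. assumption.
  - rewrite cw_length_add, Sl, Sr. reflexivity.
Qed.

Lemma walk_cons E j y u w : u = y \/ E y u -> closed_nbhd_walk E j u w ->
  exists w', closed_nbhd_walk E (S j) y w' /\
             cw_length w' (S j) = cwd y u + cw_length w j.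
Proof.
  intros Hyu Hw.
  set (w1 := fun k : nat => match k with O => y | _ => u end).
  destruct (walk_concat E 1 j y w1 w) as [w' [Hw' Hlen]].
  - split; [reflexivity|]. intros k Hk. replace k with 0%nat by lia. exact Hyu.
  - exact Hw.
  - exists w'. split; [exact Hw'|]. change (S j) with (1 + j)%nat. rewrite Hlen.
    unfold cw_length at 1, w1; simpl. ring.
Qed.

Section CyclicGraph.

Variables (V : R -> Prop) (E : R -> R -> Prop).
Hypothesis V_unit : forall x, V x -> 0 <= x < 1.
Hypothesis E_V : forall x y, E x y -> V x /\ V y.
Hypothesis E_cyclic :
  forall v u, E v u -> forall w, V w -> cyc_between v w u -> E v w /\ E w u.
Hypothesis V_closed : closed_graph V.
Hypothesis E_continuous : continuous_graph V E.

Lemma walk_in_V m v w : closed_nbhd_walk E m v w -> V v ->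
  forall k, (k <= m)%nat -> V (w k) /\ w k = frac (v + cw_length w k).
Proof.
  intros [H0 Hstep] Hv k. induction k as [|k IH]; intros Hk.
  - unfold cw_length; simpl. rewrite H0, Rplus_0_r, frac_id; auto.
  - destruct IH as [Vk Ek]; [lia|].
    split.
    + destruct (Hstep k) as [Heq | HE]; [lia | rewrite Heq; assumption | apply (E_V _ _ HE)].
    + unfold cw_length; simpl sumR. fold (cw_length w k).
      rewrite <- Rplus_assoc, <- frac_addl, <- Ek. symmetry. apply frac_add_cwd.
      destruct (Hstep k) as [Heq | HE]; [lia | rewrite Heq; auto | apply V_unit, (E_V _ _ HE)].
Qed.

Lemma walk_transfer j x w d : closed_nbhd_walk E j x w -> V x -> 0 <= d ->
  V (frac (x + d)) ->
  exists w', closed_nbhd_walk E j (frac (x + d)) w' /\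
             cw_length w j <= d + cw_length w' j.
Proof.
  revert x w d. induction j as [|j IH]; intros x w d Hw Hx Hd Hy.
  { exists (fun _ => frac (x + d)). split; [apply const_walk|].
    unfold cw_length; simpl. lra. }
  destruct (walk_split E 1 j x w Hw) as [[H0 Hstep] Htail].
  assert (Hlen : cw_length w (S j) =
                 cwd x (w 1%nat) + cw_length (fun k => w (1 + k)%nat) j).
  { change (S j) with (1 + j)%nat. rewrite cw_length_add, <- H0.
    unfold cw_length at 1; simpl. ring. }
  set (u := w 1%nat) in *. set (c := cwd x u) in *.
  set (t := cw_length (fun k => w (1 + k)%nat) j) in *.
  assert (Hxu : u = x \/ E x u) by (rewrite <- H0; apply Hstep; lia).
  assert (Vu : V u) by (destruct Hxu as [-> | HE]; [assumption | apply (E_V _ _ HE)]).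
  assert (Hc := cwd_range x u). fold c in Hc.
  assert (Hu : u = frac (x + c)) by (symmetry; apply frac_add_cwd, V_unit, Vu).
  destruct (Rle_dec c d) as [Hcd | Hdc].
  - (* reach y = x + d from u instead, then stay at y for the first step *)
    assert (Hy' : frac (u + (d - c)) = frac (x + d)).
    { rewrite Hu, frac_addl. f_equal. ring. }
    destruct (IH u _ (d - c) Htail Vu ltac:(lra) ltac:(rewrite Hy'; exact Hy))
      as [w' [Hw' Hlen']].
    rewrite Hy' in Hw'.
    destruct (walk_cons E j _ _ w' (or_introl eq_refl) Hw') as [w'' [Hw'' Hlen'']].
    exists w''. split; [exact Hw''|]. rewrite cwd_xx in Hlen''. fold t in Hlen'. lra.
  - destruct (Req_dec d 0) as [-> | Hd0].
    { exists w. rewrite Rplus_0_r, frac_id by auto. split; [assumption | lra]. }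
    (* the first step x -> u jumps over y, so y -> u is an edge by cyclicity *)
    assert (HE : E x u).
    { destruct Hxu as [Heq | HE]; [|assumption].
      unfold c in Hdc. rewrite Heq, cwd_xx in Hdc. lra. }
    destruct (E_cyclic x u HE (frac (x + d)) Hy) as [_ Hyu].
    { unfold cyc_between. rewrite cwd_frac_addr by lra. fold c. lra. }
    destruct (walk_cons E j _ _ _ (or_intror Hyu) Htail) as [w' [Hw' Hlen']].
    exists w'. split; [exact Hw'|].
    rewrite Hlen', Hu, cwd_frac_add by lra. fold t. lra.
Qed.

Lemma gamma_transfer j x d : V x -> 0 <= d -> V (frac (x + d)) ->
  gamma E j x <= d + gamma E j (frac (x + d)).
Proof.
  intros Hx Hd Hy. apply (proj2 (gamma_is_lub E j x)). intros s [w [Hw ->]].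
  destruct (walk_transfer j x w d Hw Hx Hd Hy) as [w' [Hw' Hlen]].
  pose proof (gamma_ge_walk E j _ w' Hw'). lra.
Qed.

Lemma fm_in_V i v : V v -> V (fm E i v).
Proof.
  intros Hv. unfold fm. apply NNPP. intros Hout.
  destruct (V_closed (v + gamma E i v) Hout) as [delta Hdisc].
  destruct (gamma_approx E i v delta (cond_pos delta)) as [w [Hw Hlen]].
  pose proof (gamma_ge_walk E i v w Hw).
  destruct (walk_in_V i v w Hw Hv i (le_n i)) as [Vi Hwi].
  apply (Hdisc (v + cw_length w i)).
  - unfold disc. apply Rabs_def1; lra.
  - simpl. rewrite <- Hwi. exact Vi.
Qed.

Lemma gamma_add_le i j v : V v ->
  gamma E (i + j) v <= gamma E i v + gamma E j (fm E i v).
Proof.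
  intros Hv. apply (proj2 (gamma_is_lub E (i + j) v)). intros s [w [Hw ->]].
  destruct (walk_split E i j v w Hw) as [Hwi Hwj].
  rewrite cw_length_add.
  pose proof (gamma_ge_walk E i v w Hwi).
  pose proof (gamma_ge_walk E j _ _ Hwj).
  destruct (walk_in_V (i + j) v w Hw Hv i ltac:(lia)) as [Vi Hend].
  assert (Hf : frac (w i + (gamma E i v - cw_length w i)) = fm E i v).
  { rewrite Hend, frac_addl. unfold fm. f_equal. ring. }
  pose proof (gamma_transfer j (w i) (gamma E i v - cw_length w i) Vi
                ltac:(lra) ltac:(rewrite Hf; apply fm_in_V, Hv)) as Htr.
  rewrite Hf in Htr. lra.
Qed.

Lemma gamma_add_ge i j v : V v ->
  gamma E i v + gamma E j (fm E i v) <= gamma E (i + j) v.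
Proof.
  intros Hv. apply Rle_plus_epsilon. intros eps Heps.
  set (f := fm E i v).
  destruct (E_continuous j f (fm_in_V i v Hv) (eps / 3) ltac:(lra))
    as [delta [Hdelta Hcont]].
  set (e := Rmin delta (Rmin (eps / 3) (1 / 2))).
  assert (He : 0 < e /\ e <= delta /\ e <= eps / 3 /\ e <= 1 / 2).
  { unfold e. repeat split; [repeat apply Rmin_pos; lra | apply Rmin_l | |].
    - eapply Rle_trans; [apply Rmin_r | apply Rmin_l].
    - eapply Rle_trans; [apply Rmin_r | apply Rmin_r]. }
  destruct (gamma_approx E i v e (proj1 He)) as [w1 [Hw1 Hlen1]].
  pose proof (gamma_ge_walk E i v w1 Hw1).
  destruct (walk_in_V i v w1 Hw1 Hv i (le_n i)) as [Vi Hend].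
  assert (Hclose : circ_dist f (w1 i) < delta).
  { unfold circ_dist. eapply Rle_lt_trans; [apply Rmin_r|].
    unfold f, fm. rewrite Hend, cwd_frac_add by lra. lra. }
  specialize (Hcont (w1 i) Vi Hclose). apply Rabs_def2 in Hcont.
  destruct (gamma_approx E j (w1 i) (eps / 3) ltac:(lra)) as [w2 [Hw2 Hlen2]].
  destruct (walk_concat E i j v w1 w2 Hw1 Hw2) as [w [Hw Hlen]].
  pose proof (gamma_ge_walk E (i + j) v w Hw). lra.
Qed.

Lemma gamma_add i j v : V v ->
  gamma E (i + j) v = gamma E i v + gamma E j (fm E i v).
Proof. intros Hv. apply Rle_antisym; [apply gamma_add_le | apply gamma_add_ge]; exact Hv. Qed.

Lemma fm_add i j v : V v -> fm E (i + j) v = fm E j (fm E i v).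
Proof.
  intros Hv. unfold fm at 1 3. rewrite gamma_add, <- Rplus_assoc by exact Hv.
  unfold fm at 2. rewrite frac_addl. reflexivity.
Qed.

End CyclicGraph.

Theorem mainTheorem10 (V : R -> Prop) (E : R -> R -> Prop) (p q : nat)
  (HG : is_cyclic_graph V E)
  (Hclosed : closed_graph V)
  (Hcont : continuous_graph V E)
  (Hq : (0 < q)%nat)
  (Hwf : wf_is V E (INR p / INR q)) :
  forall v, V v -> forall i j : nat,
    V (fm E i v) /\
    gamma E (i + j) v = gamma E i v + gamma E j (fm E i v) /\
    fm E (i + j) v = fm E j (fm E i v).
Proof.
  destruct HG as [[V_unit [E_V _]] E_cyclic].
  intros v Hv i j. repeat split.
  - exact (fm_in_V V E V_unit E_V Hclosed i v Hv).
  - exact (gamma_add V E V_unit E_V E_cyclic Hclosed Hcont i j v Hv).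
  - exact (fm_add V E V_unit E_V E_cyclic Hclosed Hcont i j v Hv).
Qed.
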